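(* Let $L$ be a multiplicative lattice. (1) If $\{p_\lambda\}_{\lambda\in\Lambda}$ is a family of prime elements of $L$, then $\bigwedge_{\lambda\in\Lambda}p_\lambda$ is a quasi $m$-absorbing element of $L$ for all $m\ge2$. (2) If $\{p_\lambda\}_{\lambda\in\Lambda}$ is a family of weakly prime elements of $L$, then $\bigwedge_{\lambda\in\Lambda}p_\lambda$ is a weakly quasi $m$-absorbing element of $L$ for all $m\ge2$.
   Context: A multiplicative lattice is a complete lattice $L$ with least element $0$ and compact greatest element $1$, equipped with a commutative, associative product that distributes over arbitrary joins and has $1$ as multiplicative identity. An element $a$ is compact if $a\le\bigvee_{\alpha\in I}a_\alpha$ implies $a\le\bigvee_{\alpha\in I_0}a_\alpha$ for some finite $I_0\subseteq I$; $L_*$ denotes the set of compact elements. A proper element $p$ ($p<1$) is prime (resp. weakly prime) if for $a,b\in L$, $ab\le p$ (resp. $0\ne ab\le p$) implies $a\le p$ or $b\le p$. A proper element $q$ is quasi $m$-absorbing if whenever $a^mb\le q$ for some $a,b\in L_*$, then $a^m\le q$ or $a^{m-1}b\le q$; it is weakly quasi $m$-absorbing if whenever $0\ne a^mb\le q$ for some $a,b\in L_*$, then $a^m\le q$ or $a^{m-1}b\le q$. *)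

From Stdlib Require Import List.

Record MultLattice := {
  car :> Type;
  le : car -> car -> Prop;
  le_refl : forall x, le x x;
  le_antisym : forall x y, le x y -> le y x -> x = y;
  le_trans : forall x y z, le x y -> le y z -> le x z;
  sup : (car -> Prop) -> car;
  sup_ub : forall (S : car -> Prop) x, S x -> le x (sup S);
  sup_least : forall (S : car -> Prop) y, (forall x, S x -> le x y) -> le (sup S) y;
  zero : car;
  one : car;
  zero_least : forall x, le zero x;
  one_greatest : forall x, le x one;
  one_compact : forall (I : Type) (f : I -> car),
      le one (sup (fun x => exists i, f i = x)) ->
      exists l : list I, le one (sup (fun x => exists i, In i l /\ f i = x));
  mul : car -> car -> car;
  mul_comm : forall a b, mul a b = mul b a;
  mul_assoc : forall a b c, mul a (mul b c) = mul (mul a b) c;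
  mul_one : forall a, mul a one = a;
  mul_sup : forall a (S : car -> Prop),
      mul a (sup S) = sup (fun y => exists x, S x /\ y = mul a x)
}.

Arguments le {L} : rename.
Arguments sup {L} : rename.
Arguments zero {L} : rename.
Arguments one {L} : rename.
Arguments mul {L} : rename.

Section Defs.
Variable L : MultLattice.

Definition compact (a : L) : Prop :=
  forall (I : Type) (f : I -> L),
    le a (sup (fun x => exists i, f i = x)) ->
    exists l : list I, le a (sup (fun x => exists i, In i l /\ f i = x)).

Definition meet {I : Type} (p : I -> L) : L :=
  sup (fun x => forall i, le x (p i)).

Fixpoint pow (a : L) (n : nat) : L :=
  match n with 0 => one | S n => mul a (pow a n) end.

Definition proper (p : L) : Prop := le p one /\ p <> one.

Definition prime_el (p : L) : Prop :=
  p <> one /\ forall a b : L, le (mul a b) p -> le a p \/ le b p.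

Definition weakly_prime (p : L) : Prop :=
  p <> one /\ forall a b : L, mul a b <> zero -> le (mul a b) p -> le a p \/ le b p.

Definition quasi_m_absorbing (m : nat) (q : L) : Prop :=
  q <> one /\ forall a b : L, compact a -> compact b ->
    le (mul (pow a m) b) q -> le (pow a m) q \/ le (mul (pow a (m - 1)) b) q.

Definition weakly_quasi_m_absorbing (m : nat) (q : L) : Prop :=
  q <> one /\ forall a b : L, compact a -> compact b ->
    mul (pow a m) b <> zero ->
    le (mul (pow a m) b) q -> le (pow a m) q \/ le (mul (pow a (m - 1)) b) q.

End Defs.

(* For m >= 2 we have a^m b = a (a^(m-1) b) with a^(m-1) b <= a.  Hence if a^m b
   lies below a (weakly) prime p, either factor lying below p forces
   a^(m-1) b <= p.  So every such p, and therefore the meet of any family of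
   them, even satisfies the second alternative of (weak) quasi m-absorption. *)
From Stdlib Require Import Lia.

Section MultLatticeFacts.
Variable L : MultLattice.

Lemma le_mul2l (a x y : L) : le x y -> le (mul a x) (mul a y).
Proof.
  intros Hxy.
  assert (Hjoin : sup (fun z => z = x \/ z = y) = y).
  { apply le_antisym.
    - apply sup_least. intros z [-> | ->]; [exact Hxy | apply le_refl].
    - apply sup_ub. right; reflexivity. }
  rewrite <- Hjoin, mul_sup. apply sup_ub. exists x. split; [left|]; reflexivity.
Qed.

Lemma le_mull (a x : L) : le (mul a x) a.
Proof. rewrite <- (mul_one L a) at 2. apply le_mul2l, one_greatest. Qed.

Lemma mul_powS (a b : L) (n : nat) :
  mul (pow L a (S n)) b = mul a (mul (pow L a n) b).
Proof. simpl. symmetry. apply mul_assoc. Qed.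

Lemma le_mul_powS (a b : L) (n : nat) : le (mul (pow L a (S n)) b) a.
Proof. rewrite mul_powS. apply le_mull. Qed.

Lemma meet_lb {I : Type} (p : I -> L) (i : I) : le (meet L p) (p i).
Proof. apply sup_least. intros x Hx. apply Hx. Qed.

Lemma meet_glb {I : Type} (p : I -> L) (x : L) :
  (forall i, le x (p i)) -> le x (meet L p).
Proof. intros Hx. apply sup_ub. exact Hx. Qed.

Lemma meet_neq_one {I : Type} (p : I -> L) :
  inhabited I -> (forall i, p i <> one) -> meet L p <> one.
Proof.
  intros [i] Hp Hmeet. apply (Hp i), le_antisym; [apply one_greatest|].
  rewrite <- Hmeet. apply meet_lb.
Qed.

Lemma prime_le_of_mul_le (p a x : L) :
  prime_el L p -> le x a -> le (mul a x) p -> le x p.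
Proof.
  intros [_ Hp] Hxa Hax.
  destruct (Hp a x Hax) as [Hap | Hxp]; [exact (le_trans L _ _ _ Hxa Hap) | exact Hxp].
Qed.

Lemma weakly_prime_le_of_mul_le (p a x : L) :
  weakly_prime L p -> le x a -> mul a x <> zero -> le (mul a x) p -> le x p.
Proof.
  intros [_ Hp] Hxa Hnz Hax.
  destruct (Hp a x Hnz Hax) as [Hap | Hxp]; [exact (le_trans L _ _ _ Hxa Hap) | exact Hxp].
Qed.

Section MeetOfPrimes.
Variables (I : Type) (p : I -> L).
Hypothesis I_inhabited : inhabited I.

Lemma meet_prime_quasi_m_absorbing (m : nat) :
  (forall i, prime_el L (p i)) -> 2 <= m -> quasi_m_absorbing L m (meet L p).
Proof.
  intros Hp Hm. split.
  - apply meet_neq_one; [exact I_inhabited|]. intros i. apply (Hp i).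
  - intros a b _ _ Hle. right. apply meet_glb. intros i.
    destruct m as [|[|n]]; [lia | lia|]. simpl (S (S n) - 1).
    apply (prime_le_of_mul_le (p i) a); [apply Hp | apply le_mul_powS|].
    rewrite <- mul_powS. exact (le_trans L _ _ _ Hle (meet_lb p i)).
Qed.

Lemma meet_weakly_prime_weakly_quasi_m_absorbing (m : nat) :
  (forall i, weakly_prime L (p i)) -> 2 <= m ->
  weakly_quasi_m_absorbing L m (meet L p).
Proof.
  intros Hp Hm. split.
  - apply meet_neq_one; [exact I_inhabited|]. intros i. apply (Hp i).
  - intros a b _ _ Hnz Hle. right. apply meet_glb. intros i.
    destruct m as [|[|n]]; [lia | lia|]. simpl (S (S n) - 1).
    rewrite mul_powS in Hle, Hnz.
    apply (weakly_prime_le_of_mul_le (p i) a); [apply Hp | apply le_mul_powS | exact Hnz|].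
    exact (le_trans L _ _ _ Hle (meet_lb p i)).
Qed.

End MeetOfPrimes.
End MultLatticeFacts.

Theorem mainTheorem5 :
  forall (L : MultLattice) (Lam : Type) (p : Lam -> L), inhabited Lam ->
    ((forall l, prime_el L (p l)) ->
       forall m : nat, 2 <= m -> quasi_m_absorbing L m (meet L p)) /\
    ((forall l, weakly_prime L (p l)) ->
       forall m : nat, 2 <= m -> weakly_quasi_m_absorbing L m (meet L p)).
Proof.
  intros L Lam p Hinh. split; intros Hp m Hm.
  - exact (meet_prime_quasi_m_absorbing L Lam p Hinh m Hp Hm).
  - exact (meet_weakly_prime_weakly_quasi_m_absorbing L Lam p Hinh m Hp Hm).
Qed.
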